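(* Let $X$ be a measurable space, $\mathcal{H}$ a Hilbert space and $\gamma:X\to\mathcal{H}$, $x\mapsto\gamma_x$. Assume that $\mathcal{H}_\gamma=\overline{\mathrm{span}}\{\gamma_x\in\mathcal{H}\mid x\in X\}$ is separable. Then the following conditions are equivalent: (1) the map $\gamma$ is weakly measurable, i.e. for every $v\in\mathcal{H}$ the function $A_\gamma v:X\to\mathbb{C}$, $(A_\gamma v)(x)=\langle v,\gamma_x\rangle_{\mathcal{H}}$, is measurable; (2) the map $\gamma$ is measurable from $X$ to $\mathcal{H}$; (3) the function $\Gamma:X\times X\to\mathbb{C}$, $\Gamma(x,t)=\langle\gamma_t,\gamma_x\rangle_{\mathcal{H}}$, is measurable; (4) for all $x\in X$, the function $\Gamma(x,\cdot)$ is measurable from $X$ into $\mathbb{C}$. If $X$ is endowed with a $\sigma$-finite measure $\mu$ and one of the conditions (1)–(4) holds, then $\mathrm{ran}\,A_\gamma\subset\mathcal{M}(X,\mu)$, the operator $A_\gamma$ is continuous from $\mathcal{H}$ into $\mathcal{M}(X,\mu)$, and $$\ker A_\gamma=\mathcal{H}_\mu^\perp,$$ where $\mathcal{S}=\{v\in\mathcal{H}\mid \mu(\gamma^{-1}(B(v,\varepsilon)))>0\ \forall\varepsilon>0\}$ (with $B(v,\varepsilon)=\{w\in\mathcal{H}\mid\|w-v\|_{\mathcal{H}}<\varepsilon\}$) is the essential range of $\gamma$ and $\mathcal{H}_\mu=\overline{\mathrm{span}}\,\mathcal{S}$.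
   Context: $\mathcal{M}(X,\mu)$ denotes the topological vector space of all measurable complex functions on $X$ (identified $\mu$-a.e.) endowed with the topology of convergence in measure on subsets of finite measure. The scalar product $\langle\cdot,\cdot\rangle_{\mathcal{H}}$ is linear in the first argument. *)

From HB Require Import structures.
From mathcomp Require Import all_boot all_order all_algebra.
From mathcomp Require Import all_classical all_reals all_analysis.
From mathcomp Require Import complex.
Import Order.TTheory GRing.Theory Num.Theory.
Import numFieldNormedType.Exports.

Set Implicit Arguments.
Unset Strict Implicit.
Unset Printing Implicit Defensive.

Local Open Scope ring_scope.
Local Open Scope classical_set_scope.

Definition Cplx (R : realType) : numClosedFieldType := R[i].

Definition RtoC (R : realType) (r : R) : Cplx R := (r%:C)%C.

Definition borelC (R : realType) := g_sigma_algebraType (@open (Cplx R)).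
Definition borelH (R : realType) (H : normedModType (Cplx R)) :=
  g_sigma_algebraType (@open H).

Definition Cmeasurable d (T : measurableType d) (R : realType) (f : T -> Cplx R) :=
  measurable_fun setT (f : T -> borelC R).

Definition Hmeasurable d (T : measurableType d) (R : realType)
    (H : normedModType (Cplx R)) (f : T -> H) :=
  measurable_fun setT (f : T -> borelH H).

(* Together with completeness of H
   (H : completeNormedModType) this makes H a complex Hilbert space. *)
Record is_inner_product (R : realType) (H : normedModType (Cplx R))
    (ip : H -> H -> Cplx R) : Prop := {
  ip_linear_l : forall (a : Cplx R) (u v w : H), ip (a *: u + v) w = a * ip u w + ip v w;
  ip_conj_sym : forall u v : H, ip u v = (ip v u)^*;
  ip_norm : forall u : H, ip u u = `|u| ^+ 2
}.

Definition span (R : realType) (H : normedModType (Cplx R)) (S : set H) : set H :=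
  [set v | exists n (c : 'I_n -> Cplx R) (s : 'I_n -> H),
     (forall i, S (s i)) /\ v = \sum_(i < n) c i *: s i].

Definition closed_span (R : realType) (H : normedModType (Cplx R)) (S : set H) : set H :=
  closure (span S).

Definition separable_set (R : realType) (H : normedModType (Cplx R)) (A : set H) :=
  exists D : set H, countable D /\ D `<=` A /\ A `<=` closure D.

Definition orthocomp (R : realType) (H : normedModType (Cplx R))
    (ip : H -> H -> Cplx R) (S : set H) : set H :=
  [set v | forall w, S w -> ip v w = 0].

Definition A_gamma (R : realType) (H : normedModType (Cplx R))
    (ip : H -> H -> Cplx R) (X : Type) (gamma : X -> H) (v : H) : X -> Cplx R :=
  fun x => ip v (gamma x).

Definition Gamma_ker (R : realType) (H : normedModType (Cplx R))
    (ip : H -> H -> Cplx R) (X : Type) (gamma : X -> H) : X * X -> Cplx R :=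
  fun p => ip (gamma p.2) (gamma p.1).

Definition ballH (R : realType) (H : normedModType (Cplx R)) (v : H) (eps : R) : set H :=
  [set w | `|w - v| < RtoC eps].

Definition ess_range d (X : measurableType d) (R : realType)
    (H : normedModType (Cplx R)) (mu : {measure set X -> \bar R}) (gamma : X -> H)
    : set H :=
  [set v | forall eps : R, 0 < eps ->
     (0 < mu (gamma @^-1` ballH v eps))%E].

Definition dev_set (X : Type) (R : realType) (E : set X) (f g : X -> Cplx R) (eps : R)
  : set X := E `&` [set x | RtoC eps < `|f x - g x|].

(* Continuity of a map A : H -> (functions X -> C) into M(X,mu), endowed with
   the topology of convergence in measure on subsets of finite measure: for
   every v, every measurable E of finite measure and every eps, delta > 0,
   there is eta > 0 with ||w - v|| < eta ->
   mu(E /\ {x | |A w x - A v x| > eps}) < delta. *)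
Definition continuous_in_measure d (X : measurableType d) (R : realType)
    (H : normedModType (Cplx R)) (mu : {measure set X -> \bar R})
    (A : H -> X -> Cplx R) :=
  forall (v : H) (E : set X) (eps delta : R),
    measurable E -> (mu E < +oo)%E -> 0 < eps -> 0 < delta ->
    exists2 eta : R, 0 < eta &
      forall w : H, `|w - v| < RtoC eta ->
        (mu (dev_set E (A w) (A v) eps) < delta%:E)%E.

From Pilot Require Import Defs.
From HB Require Import structures.
From mathcomp Require Import all_boot all_order all_algebra.
From mathcomp Require Import all_classical all_reals all_analysis.
From mathcomp Require Import complex.
From mathcomp Require Import ring lra.
Import Order.TTheory GRing.Theory Num.Theory.
Import numFieldNormedType.Exports.
Local Open Scope ring_scope.
Local Open Scope classical_set_scope.

(* Separability of the closed span of the gamma_x yields a sequence (e_n) in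
   span gamma(X) that is dense on the range of gamma, so Borel measurability of
   gamma reduces to measurability of the preimages of the balls B(c, r) with
   c = e_n.  Now ||gamma_t - c|| <= s iff |<gamma_t - c, e_m - c>| <= s ||e_m - c||
   for all m (Cauchy-Schwarz one way, density of the e_m the other), so such a
   preimage is a countable union of countable intersections of level sets of the
   scalar functions t |-> <gamma_t, e_m>.  These are measurable under (1), and
   under (4) because each e_m is a finite combination of vectors gamma_x.  Joint
   continuity of the inner product gives (2) => (1) and (2) => (3).
   If <v, gamma_x> = 0 outside a null set N, then v is orthogonal to the closure
   of gamma(X \ N), which contains the essential range.  Conversely gamma_x lies
   in the essential range for almost every x: the exceptional set is covered by
   the countably many null preimages of balls B(e_n, 1/(k+1)).  Continuity in
   measure holds because, inside a set of finite measure, ||gamma|| is bounded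
   outside a set of small measure. *)

Set Implicit Arguments.
Unset Strict Implicit.

Section ComplexScalars.
Variable R : realType.
Local Notation C := (Cplx R).

Lemma Creal_lt_nat (c : C) : c \is Num.real -> exists n : nat, c < n%:R.
Proof.
move=> cr; rewrite -(RRe_real cr); exists (Num.truncn (complex.Re c)).+1.
by rewrite -(rmorph_nat (real_complex R)) ltcR truncnS_gt.
Qed.

Definition inv_succ (k : nat) : C := k.+1%:R^-1.

Lemma inv_succ_gt0 k : 0 < inv_succ k.
Proof. by rewrite invr_gt0 ltr0Sn. Qed.

Lemma inv_succ_le1 k : inv_succ k <= 1.
Proof. by rewrite invf_le1 ?ler1n ?ltr0Sn. Qed.

Lemma inv_succ_lt (e : C) : 0 < e -> exists k, inv_succ k < e.
Proof.
move=> e0; have [n ltn] : exists n : nat, e^-1 < n%:R.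
  by apply: Creal_lt_nat; rewrite gtr0_real ?invr_gt0.
exists n; rewrite invf_plt ?posrE ?ltr0Sn //.
by apply: lt_le_trans ltn _; rewrite ler_nat.
Qed.

Lemma inv_succ_half (e : C) : 0 < e -> exists k, inv_succ k + inv_succ k < e.
Proof.
move=> e0; have [k ltk] := inv_succ_lt (divr_gt0 e0 (ltr0Sn _ 1)).
by exists k; rewrite [e]splitr ltrD.
Qed.

End ComplexScalars.
Arguments inv_succ {R}.

Section NormedSpace.
Variables (K : numFieldType) (V : normedModType K).

Lemma open_norm_ballP (U : set V) y : open U -> U y ->
  exists2 e, 0 < e & forall z, `|y - z| < e -> U z.
Proof.
move=> oU Uy; have /nbhs_ballP[e e0 sub] : nbhs y U by exact: open_nbhs_nbhs.
by exists e => // z yz; apply: sub; rewrite -ball_normE.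
Qed.

Lemma open_norm_ball (c : V) r : open [set z | `|c - z| < r].
Proof. by have := ball_open c r; rewrite -ball_normE. Qed.

Lemma open_norm_gt (a : K) : open [set z : V | a < `|z|].
Proof.
rewrite openE => z /= az; apply/nbhs_ballP.
exists (`|z| - a); first by rewrite /= subr_gt0.
move=> w; rewrite -ball_normE /= => zw.
have := lerB_dist z (z - w); rewrite subKr; apply: lt_le_trans.
by rewrite ltrBrDr addrC -ltrBrDr.
Qed.

Lemma closure_normP (A : set V) y :
  closure A y <-> forall e, 0 < e -> exists2 z, A z & `|y - z| < e.
Proof.
split => [cl e e0 | h B /nbhs_ballP[e e0 sub]].
  have [z [Az yz]] := cl _ (nbhsx_ballx y _ e0).
  by exists z => //; move: yz; rewrite -ball_normE.
by have [z Az yz] := h e e0; exists z; split => //; apply: sub; rewrite -ball_normE.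
Qed.

Lemma continuous_normP (W : normedModType K) (g : V -> W) :
  (forall x e, 0 < e -> exists2 dl, 0 < dl &
     forall y, `|x - y| < dl -> `|g x - g y| < e) -> continuous g.
Proof.
move=> h x A /nbhs_ballP[e e0 sub]; have [dl dl0 hdl] := h x e e0.
apply/nbhs_ballP; exists dl => // y; rewrite -!ball_normE /= => xy.
by apply: sub; rewrite -ball_normE /=; exact: hdl.
Qed.

End NormedSpace.

Section InnerProduct.
Variables (R : realType) (H : normedModType (Cplx R)) (ip : H -> H -> Cplx R).
Hypothesis ipP : is_inner_product ip.

Lemma ip0l w : ip 0 w = 0.
Proof.
have := ip_linear_l ipP 1 0 0 w; rewrite scale1r addr0 mul1r => h.
by apply: (addrI (ip 0 w)); rewrite addr0 -h.
Qed.

Lemma ipDl u v w : ip (u + v) w = ip u w + ip v w.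
Proof. by have := ip_linear_l ipP 1 u v w; rewrite scale1r mul1r. Qed.

Lemma ipZl a u w : ip (a *: u) w = a * ip u w.
Proof. by have := ip_linear_l ipP a u 0 w; rewrite addr0 ip0l addr0. Qed.

Lemma ipBl u v w : ip (u - v) w = ip u w - ip v w.
Proof. by rewrite ipDl -scaleN1r ipZl mulN1r. Qed.

Lemma ip0r w : ip w 0 = 0.
Proof. by rewrite (ip_conj_sym ipP) ip0l conjC0. Qed.

Lemma ipDr u v w : ip w (u + v) = ip w u + ip w v.
Proof. by rewrite (ip_conj_sym ipP) ipDl rmorphD /= -!(ip_conj_sym ipP). Qed.

Lemma ipZr a u w : ip w (a *: u) = a^* * ip w u.
Proof. by rewrite (ip_conj_sym ipP) ipZl rmorphM /= -!(ip_conj_sym ipP). Qed.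

Lemma ipBr u v w : ip w (u - v) = ip w u - ip w v.
Proof. by rewrite ipDr -scaleN1r ipZr rmorphN /= rmorph1 mulN1r. Qed.

Lemma ip_sumr w n (c : 'I_n -> Cplx R) (v : 'I_n -> H) :
  ip w (\sum_(i < n) c i *: v i) = \sum_(i < n) (c i)^* * ip w (v i).
Proof.
elim: n c v => [|n IH] c v; first by rewrite !big_ord0 ip0r.
by rewrite !big_ord_recr /= ipDr ipZr IH.
Qed.

Lemma ip_cauchy_schwarz u v : `|ip u v| <= `|u| * `|v|.
Proof.
have [->|v0] := eqVneq v 0; first by rewrite ip0r !normr0 mulr0.
set a := ip u v; set b := ip v v.
have bE : b = `|v| ^+ 2 by exact: (ip_norm ipP).
have b_gt0 : 0 < b by rewrite bE exprn_gt0 // normr_gt0.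
have bJ : b^* = b by rewrite bE; apply/CrealP; rewrite rpredX // normr_real.
have := exprn_ge0 2 (normr_ge0 (u - (a / b) *: v)); rewrite -(ip_norm ipP).
rewrite ipBl !ipBr !ipZl !ipZr (ip_conj_sym ipP v u) -/a -/b (ip_norm ipP).
have -> : `|u| ^+ 2 - (a / b)^* * a - (a / b * a^* - a / b * ((a / b)^* * b)) =
          `|u| ^+ 2 - a * a^* / b.
  by rewrite rmorphM fmorphV /= bJ; field; rewrite lt0r_neq0.
rewrite subr_ge0 ler_pdivrMr // -sqr_normc bE => h.
by rewrite -(@ler_pXn2r _ 2) ?nnegrE ?mulr_ge0 // exprMn.
Qed.

Local Notation C := (Cplx R).

Lemma ip_jointly_continuous (y z : H) (e : C) : 0 < e -> exists2 dl, 0 < dl &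
  forall y' z', `|y - y'| < dl -> `|z - z'| < dl -> `|ip z y - ip z' y'| < e.
Proof.
move=> e0; set M := `|y| + `|z| + 1.
have M0 : 0 < M by rewrite ltr_wpDl ?addr_ge0.
have [k ltk] := inv_succ_lt (divr_gt0 e0 M0).
exists (inv_succ k) => [|y' z' yy' zz']; first exact: inv_succ_gt0.
have -> : ip z y - ip z' y' = ip (z - z') y + ip z' (y - y').
  by rewrite ipBl ipBr addrA subrK.
apply: le_lt_trans (ler_normD _ _) _.
have z'_le : `|z'| <= `|z| + 1.
  have := lerB_dist z' z; rewrite lerBlDl distrC => /le_trans; apply.
  by rewrite lerD2l (le_trans (ltW zz')) ?inv_succ_le1.
have h1 : `|ip (z - z') y| <= inv_succ k * `|y|.
  exact: le_trans (ip_cauchy_schwarz _ _) (ler_wpM2r (normr_ge0 _) (ltW zz')).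
have h2 : `|ip z' (y - y')| <= (`|z| + 1) * inv_succ k.
  exact: le_trans (ip_cauchy_schwarz _ _) (ler_pM _ _ z'_le (ltW yy')).
apply: le_lt_trans (lerD h1 h2) _.
have -> : inv_succ k * `|y| + (`|z| + 1) * inv_succ k = inv_succ k * M.
  by rewrite /M; ring.
by rewrite -ltr_pdivlMr.
Qed.

Lemma ip_continuousr v : continuous (ip v).
Proof.
apply: continuous_normP => y e e0; have [dl dl0 hdl] := ip_jointly_continuous y v e0.
by exists dl => // y' yy'; apply: hdl; rewrite // subrr normr0.
Qed.

Lemma ip_closure_eq0 v (S : set H) : (forall z, S z -> ip v z = 0) ->
  forall w, closure S w -> ip v w = 0.
Proof.
move=> Sv; have cl0 : closed [set w | ip v w = 0].
  have -> : [set w | ip v w = 0] = ~` (ip v @^-1` [set z | 0 < `|z|]).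
    apply/seteqP; split => w /=; rewrite normr_gt0; first by move=> ->; rewrite eqxx.
    by move/negP/negPn/eqP.
  exact/open_closedC/(continuousP _).1/open_norm_gt/ip_continuousr.
by move=> w /(closureS Sv); rewrite -(closure_id _).1.
Qed.

Lemma ip_span_eq0 v (S : set H) : (forall z, S z -> ip v z = 0) ->
  forall w, Defs.span S w -> ip v w = 0.
Proof.
move=> Sv _ [n [c [s [Ss ->]]]]; rewrite ip_sumr big1 // => i _.
by rewrite Sv // mulr0.
Qed.

Lemma norm_le_ip_dense (u : H) (s : C) (E : nat -> H) : 0 <= s ->
  (forall e, 0 < e -> exists m, `|u - E m| < e) ->
  (forall m, `|ip u (E m)| <= s * `|E m|) -> `|u| <= s.
Proof.
move=> s0 dE hE.
have key e : 0 < e -> `|u| ^+ 2 <= s * `|u| + e * (s + `|u|).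
  move=> e0; have [m um] := dE e e0.
  have -> : `|u| ^+ 2 = `|ip u (E m) + ip u (u - E m)|.
    by rewrite ipBr addrC subrK (ip_norm ipP) normrX normr_id.
  apply: le_trans (ler_normD _ _) _.
  have Em_le : `|E m| <= `|u| + e.
    have := lerB_dist (E m) u; rewrite lerBlDl distrC => /le_trans; apply.
    by rewrite lerD2l ltW.
  have h1 := ler_wpM2l s0 Em_le.
  have h2 := ler_wpM2l (normr_ge0 u) (ltW um).
  have -> : s * `|u| + e * (s + `|u|) = s * (`|u| + e) + `|u| * e by ring.
  exact: lerD (le_trans (hE m) h1) (le_trans (ip_cauchy_schwarz _ _) h2).
have sq_le : `|u| ^+ 2 <= s * `|u|.
  apply/ler_addgt0Pr => t t0; set c := s + `|u|.
  have c1 : 0 < c + 1 by rewrite ltr_wpDl ?addr_ge0.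
  apply: le_trans (key _ (divr_gt0 t0 c1)) _; rewrite lerD2l.
  by rewrite mulrAC ler_pdivrMr // ler_pM2l // lerDl.
have [->|u0] := eqVneq u 0; first by rewrite normr0.
by rewrite expr2 ler_pM2r ?normr_gt0 in sq_le.
Qed.

End InnerProduct.

Section BorelMeasurable.
Context d (T : measurableType d).

Lemma measurable_fun_open (Y : ptopologicalType)
    (f : T -> g_sigma_algebraType (@open Y)) :
  (forall U : set Y, open U -> measurable (f @^-1` U)) -> measurable_fun setT f.
Proof.
move=> fU; apply: (@measurability _ _ _ _ setT f (@open Y)) => // _ [U oU <-].
by rewrite setTI; exact: fU.
Qed.

Lemma measurable_preimage_open (Y : ptopologicalType)
    (f : T -> g_sigma_algebraType (@open Y)) (U : set Y) :
  measurable_fun setT f -> open U -> measurable (f @^-1` U).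
Proof.
by move=> mf oU; have := mf measurableT U (sub_sigma_algebra oU); rewrite setTI.
Qed.

Lemma measurable_fun_comp_continuous (Y Z : ptopologicalType) (f : T -> Y) (g : Y -> Z) :
  measurable_fun setT (f : T -> g_sigma_algebraType (@open Y)) -> continuous g ->
  measurable_fun setT ((g \o f) : T -> g_sigma_algebraType (@open Z)).
Proof.
move=> mf cg; apply: measurable_fun_open => U oU.
rewrite comp_preimage; apply: (measurable_preimage_open mf).
by move/continuousP: cg; apply.
Qed.

Lemma bigcup_countable_measurable (I : countType) (F : I -> set T) (P : set I) :
  (forall i, P i -> measurable (F i)) -> measurable (\bigcup_(i in P) F i).
Proof.
move=> mF; rewrite bigcup_mkcond.
apply: countable_bigcupT_measurable => [|i]; first exact: countableP.
by case: ifPn => // /set_mem /mF.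
Qed.

End BorelMeasurable.

Section SeparableApproximation.
Variable R : realType.
Local Notation C := (Cplx R).
Context d (T : measurableType d).

(* The preimage of an open set U is the union of the preimages of the products
   of balls B(s1 n1, 1/(k+1)) x B(s2 n2, 1/(k+1)) that phi maps into U. *)
Lemma measurable_fun_comp2_continuous (Y1 Y2 Z : normedModType C)
    (f1 : T -> Y1) (f2 : T -> Y2) (s1 : nat -> Y1) (s2 : nat -> Y2)
    (phi : Y1 -> Y2 -> Z) :
  (forall x e, 0 < e -> exists n, `|f1 x - s1 n| < e) ->
  (forall x e, 0 < e -> exists n, `|f2 x - s2 n| < e) ->
  (forall n k, measurable (f1 @^-1` [set y | `|s1 n - y| < inv_succ k])) ->
  (forall n k, measurable (f2 @^-1` [set y | `|s2 n - y| < inv_succ k])) ->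
  (forall y z e, 0 < e -> exists2 dl, 0 < dl & forall y' z',
      `|y - y'| < dl -> `|z - z'| < dl -> `|phi y z - phi y' z'| < e) ->
  measurable_fun setT
    ((fun x => phi (f1 x) (f2 x)) : T -> g_sigma_algebraType (@open Z)).
Proof.
move=> fs1 fs2 mf1 mf2 phiC; apply: measurable_fun_open => U oU.
pose ball1 n k := [set y | `|s1 n - y| < inv_succ k].
pose ball2 n k := [set z | `|s2 n - z| < inv_succ k].
pose inside (p : nat * nat * nat) := forall y z,
  ball1 p.1.1 p.2 y -> ball2 p.1.2 p.2 z -> U (phi y z).
suff -> : (fun x => phi (f1 x) (f2 x)) @^-1` U =
    \bigcup_(p in inside) (f1 @^-1` ball1 p.1.1 p.2 `&` f2 @^-1` ball2 p.1.2 p.2).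
  apply: bigcup_countable_measurable => p _.
  by apply: measurableI; [exact: mf1 | exact: mf2].
apply/seteqP; split => [x /= Ux|x [p insp [/= b1 b2]]]; last exact: insp.
have [e e0 eU] := open_norm_ballP oU Ux.
have [dl dl0 phid] := phiC (f1 x) (f2 x) e e0.
have [k ltk] := inv_succ_half dl0.
have [n1 n1x] := fs1 x _ (inv_succ_gt0 R k).
have [n2 n2x] := fs2 x _ (inv_succ_gt0 R k).
exists (n1, n2, k); last by split; rewrite /ball1 /ball2 /= distrC.
move=> y z /= b1 b2; apply/eU/phid.
  by apply: le_lt_trans (ler_distD (s1 n1) _ _) (lt_trans (ltrD n1x b1) ltk).
by apply: le_lt_trans (ler_distD (s2 n2) _ _) (lt_trans (ltrD n2x b2) ltk).
Qed.

Lemma measurable_fun_balls (Y : normedModType C) (f : T -> Y) (s : nat -> Y) :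
  (forall x e, 0 < e -> exists n, `|f x - s n| < e) ->
  (forall n k, measurable (f @^-1` [set y | `|s n - y| < inv_succ k])) ->
  measurable_fun setT (f : T -> g_sigma_algebraType (@open Y)).
Proof.
move=> fs mf.
apply: (@measurable_fun_comp2_continuous Y Y Y f f s s (fun y _ => y)) => // y z e e0.
by exists e.
Qed.

End SeparableApproximation.

Section ComplexMeasurable.
Variable R : realType.
Local Notation C := (Cplx R).

Lemma normc_lt_half (x y e : R) : `|x| < e / 2 -> `|y| < e / 2 ->
  `|(x +i* y)%C : C| < e%:C%C.
Proof.
rewrite normc_def /= ltcR !ltr_norml => /andP[x1 x2] /andP[y1 y2].
have e0 : 0 < e by lra.
by rewrite -[e in _ < e]ger0_norm ?ltW // -sqrtr_sqr ltr_sqrt ?exprn_gt0 //; nra.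
Qed.

Definition cplx_rat (n : nat) : C :=
  if @unpickle (rat * rat)%type n is Some (a, b) then (ratr a +i* ratr b)%C else 0.

Lemma cplx_rat_dense (z : C) e : 0 < e -> exists n, `|z - cplx_rat n| < e.
Proof.
move=> e0; have /complex_realP[r er] := gtr0_real e0; subst e; rewrite ltcR in e0.
case: z => x y.
have rat_near u : exists q : rat, u - r / 2 < ratr q < u + r / 2.
  have [q] := @rat_in_itvoo R (u - r / 2) (u + r / 2) ltac:(lra).
  by rewrite in_itv; exists q.
have [a /andP[xa ax]] := rat_near x.
have [b /andP[yb bx]] := rat_near y.
exists (pickle (a, b)); rewrite /cplx_rat pickleK.
by apply: normc_lt_half; rewrite ltr_norml; apply/andP; split; lra.
Qed.

Context d (T : measurableType d).
Implicit Types f g : T -> C.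

Lemma Cmeasurable_cst (c : C) : Cmeasurable (fun _ : T => c).
Proof. exact: measurable_cst. Qed.

Lemma Cmeasurable_comp f (h : C -> C) :
  Cmeasurable f -> continuous h -> Cmeasurable (h \o f).
Proof. exact: measurable_fun_comp_continuous. Qed.

Lemma Cmeasurable_conj f : Cmeasurable f -> Cmeasurable (fun x => (f x)^*).
Proof.
move=> mf; apply: (Cmeasurable_comp mf); apply: continuous_normP => z e e0.
by exists e => // z'; rewrite -rmorphB normcJ.
Qed.

Lemma Cmeasurable_mull (c : C) f : Cmeasurable f -> Cmeasurable (fun x => c * f x).
Proof.
move=> mf; apply: (Cmeasurable_comp mf (h := fun z => c * z)) => z.
by apply: continuousM; [exact: cst_continuous | exact: cvg_id].
Qed.

Lemma Cmeasurable_add f g :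
  Cmeasurable f -> Cmeasurable g -> Cmeasurable (fun x => f x + g x).
Proof.
move=> mf mg; apply: (measurable_fun_comp2_continuous (s1 := cplx_rat) (s2 := cplx_rat)).
- by move=> x e; exact: cplx_rat_dense.
- by move=> x e; exact: cplx_rat_dense.
- by move=> n k; exact: measurable_preimage_open mf (open_norm_ball _ _).
- by move=> n k; exact: measurable_preimage_open mg (open_norm_ball _ _).
move=> y z e e0; exists (e / 2) => [|y' z' yy' zz']; first by rewrite divr_gt0.
rewrite opprD addrACA; apply: le_lt_trans (ler_normD _ _) _.
by rewrite [e]splitr ltrD.
Qed.

Lemma Cmeasurable_sub f g :
  Cmeasurable f -> Cmeasurable g -> Cmeasurable (fun x => f x - g x).
Proof.
move=> mf mg; have := Cmeasurable_add mf (Cmeasurable_mull (-1) mg).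
by apply: eq_measurable_fun => x _; rewrite mulN1r.
Qed.

Lemma Cmeasurable_sum n (F : 'I_n -> T -> C) :
  (forall i, Cmeasurable (F i)) -> Cmeasurable (fun x => \sum_(i < n) F i x).
Proof.
elim: n F => [|n IH] F mF.
  by have := Cmeasurable_cst 0; apply: eq_measurable_fun => x _; rewrite big_ord0.
have := Cmeasurable_add (IH _ (fun i => mF (widen_ord (leqnSn n) i))) (mF ord_max).
by apply: eq_measurable_fun => x _; rewrite big_ord_recr.
Qed.

End ComplexMeasurable.

Section DenseSequence.
Variables (R : realType) (V : normedModType (Cplx R)).

Lemma span1 (S : set V) w : S w -> Defs.span S w.
Proof.
by move=> Sw; exists 1%N, (fun _ => 1), (fun _ => w); rewrite big_ord1 scale1r.
Qed.

Lemma span0 (S : set V) : Defs.span S 0.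
Proof. by exists 0%N, (fun _ => 0), (fun _ => 0); rewrite big_ord0; split => // -[]. Qed.

Lemma separable_dense_seq (S : set V) (s0 : V) : S s0 ->
  separable_set (closure S) ->
  exists s : nat -> V, (forall n, S (s n)) /\
    forall y, closure S y -> forall e, 0 < e -> exists n, `|y - s n| < e.
Proof.
move=> Ss0 [D [/pcard_surjP[e De] [DS SD]]].
pose near_S n k := [set z | S z /\ `|e n - z| < inv_succ k].
pose s m := if @unpickle (nat * nat)%type m is Some (n, k)
  then xget s0 (near_S n k) else s0.
exists s; split => [m|y Sy eps eps0].
  by rewrite /s; case: (unpickle m) => [[n k]|] //; case: xgetP => [z _ []|].
have [k ltk] := inv_succ_half eps0.
have [z Dz yz] := (closure_normP _ _).1 (SD _ Sy) _ (inv_succ_gt0 R k).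
have [n _ enz] := De _ Dz.
have [w Sw zw] := (closure_normP _ _).1 (DS _ Dz) _ (inv_succ_gt0 R k).
have /(xgetPex s0)[_] : exists w, near_S n k w by exists w; rewrite /near_S enz.
rewrite enz => zs; exists (pickle (n, k)); rewrite /s pickleK.
by apply: le_lt_trans (ler_distD z _ _) (lt_trans (ltrD yz zs) ltk).
Qed.

End DenseSequence.

Section WeakToStrongMeasurability.
Variables (R : realType) (H : normedModType (Cplx R)) (ip : H -> H -> Cplx R).
Hypothesis ipP : is_inner_product ip.
Context d (X : measurableType d) (gamma : X -> H).
Local Notation C := (Cplx R).

Lemma measurable_ball_preimage (e : nat -> H) (c : H) (r : C) :
  (forall x eps, 0 < eps -> exists m, `|gamma x - e m| < eps) ->
  (forall m, Cmeasurable (fun t => ip (gamma t) (e m))) ->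
  Cmeasurable (fun t => ip (gamma t) c) ->
  measurable (gamma @^-1` [set y | `|c - y| < r]).
Proof.
move=> e_dense me mc.
pose g m t := ip (gamma t - c) (e m - c).
have mg m : Cmeasurable (g m).
  have := Cmeasurable_sub (Cmeasurable_sub (me m) mc)
    (Cmeasurable_cst (ip c (e m) - ip c c)).
  by apply: eq_measurable_fun => t _; rewrite /g (ipBl ipP) !(ipBr ipP).
pose s j := r - inv_succ j.
suff -> : gamma @^-1` [set y | `|c - y| < r] =
    \bigcup_(j in [set j | inv_succ j < r])
      \bigcap_m ~` (g m @^-1` [set z | s j * `|e m - c| < `|z|]).
  apply: bigcup_measurable => j _; apply: bigcapT_measurable => m.
  exact: measurableC (measurable_preimage_open (mg m) (open_norm_gt _ _)).
apply/seteqP; split => [t /= ctr|t [j /= jr gjt]].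
  have [j ltj] : exists j, inv_succ j < r - `|c - gamma t|.
    by apply: inv_succ_lt; rewrite subr_gt0.
  exists j => [|m _ /=]; first by apply: lt_le_trans ltj _; rewrite gerBl.
  apply/negP; rewrite le_gtF //.
  apply: le_trans (ip_cauchy_schwarz ipP _ _) (ler_wpM2r (normr_ge0 _) _).
  by rewrite distrC /s ltW // ltrBrDl -ltrBrDr.
have sj0 : 0 <= s j by rewrite subr_ge0 ltW.
rewrite distrC; apply: le_lt_trans (_ : `|gamma t - c| <= s j) _; last first.
  by rewrite ltrBlDr ltrDl inv_succ_gt0.
apply: (norm_le_ip_dense ipP (E := fun m => e m - c)) => // [eps eps0 | m].
  by have [m gm] := e_dense t eps eps0; exists m; rewrite opprB addrA subrK.
by have /negP := gjt m I; rewrite real_leNgt ?realM ?normr_real ?ger0_real.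
Qed.

End WeakToStrongMeasurability.

Section MeasurabilityConditions.
Variables (R : realType) (H : normedModType (Cplx R)) (ip : H -> H -> Cplx R).
Hypothesis ipP : is_inner_product ip.
Context d (X : measurableType d) (gamma : X -> H).
Hypothesis sep : separable_set (closed_span (range gamma)).

Lemma span_range_dense_seq : exists e : nat -> H,
  (forall n, Defs.span (range gamma) (e n)) /\
  forall x eps, 0 < eps -> exists n, `|gamma x - e n| < eps.
Proof.
have [e [Se e_dense]] := separable_dense_seq (span0 (range gamma)) sep.
by exists e; split => // x; apply: e_dense; apply/subset_closure/span1; exists x.
Qed.

Lemma Hmeasurable_ip_dense (e : nat -> H) :
  (forall x eps, 0 < eps -> exists n, `|gamma x - e n| < eps) ->
  (forall m, Cmeasurable (fun t => ip (gamma t) (e m))) -> Hmeasurable gamma.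
Proof.
move=> e_dense me; apply: (measurable_fun_balls e_dense) => n k.
by apply: (measurable_ball_preimage ipP); [exact: e_dense | exact: me | exact: me].
Qed.

Lemma A_gamma_measurable :
  Hmeasurable gamma -> forall v, Cmeasurable (A_gamma ip gamma v).
Proof.
move=> mg v; apply: (measurable_fun_comp_continuous (g := ip v) mg).
exact: ip_continuousr.
Qed.

Lemma Hmeasurable_A_gamma :
  (forall v, Cmeasurable (A_gamma ip gamma v)) -> Hmeasurable gamma.
Proof.
move=> mA; have [e [_ e_dense]] := span_range_dense_seq.
apply: (Hmeasurable_ip_dense e_dense) => m; have := Cmeasurable_conj (mA (e m)).
by apply: eq_measurable_fun => t _; rewrite /A_gamma -(ip_conj_sym ipP).
Qed.

Lemma Gamma_ker_measurable : Hmeasurable gamma -> Cmeasurable (Gamma_ker ip gamma).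
Proof.
move=> mg; have [e [_ e_dense]] := span_range_dense_seq.
have mball n k : measurable (gamma @^-1` [set y | `|e n - y| < inv_succ k]).
  exact: measurable_preimage_open mg (open_norm_ball _ _).
apply: (measurable_fun_comp2_continuous (f1 := gamma \o fst) (f2 := gamma \o snd)
  (s1 := e) (s2 := e) (phi := fun y z => ip z y)).
- by move=> [x t] /=; exact: e_dense.
- by move=> [x t] /=; exact: e_dense.
- by move=> n k; rewrite comp_preimage -setXT; exact: measurableX (mball n k) _.
- by move=> n k; rewrite comp_preimage -setTX; exact: measurableX _ (mball n k).
- by move=> y z eps; exact: ip_jointly_continuous.
Qed.

Lemma Gamma_ker_sections_measurable : Cmeasurable (Gamma_ker ip gamma) ->
  forall x, Cmeasurable (fun t => Gamma_ker ip gamma (x, t)).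
Proof. by move=> mG x; exact: measurableT_comp mG (pair1_measurable x). Qed.

Lemma Hmeasurable_Gamma_ker_sections :
  (forall x, Cmeasurable (fun t => Gamma_ker ip gamma (x, t))) -> Hmeasurable gamma.
Proof.
move=> mG; have [e [Se e_dense]] := span_range_dense_seq.
apply: (Hmeasurable_ip_dense e_dense) => m.
have [n [c [s [Ss ->]]]] := Se m.
have ms i : Cmeasurable (fun t => (c i)^* * ip (gamma t) (s i)).
  by apply: Cmeasurable_mull; have [x _ <-] := Ss i; exact: mG.
have := Cmeasurable_sum ms.
by apply: eq_measurable_fun => t _; rewrite (ip_sumr ipP).
Qed.

End MeasurabilityConditions.

Section AGammaOnMeasureSpace.
Variables (R : realType) (H : normedModType (Cplx R)) (ip : H -> H -> Cplx R).
Hypothesis ipP : is_inner_product ip.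
Context d (X : measurableType d) (gamma : X -> H) (mu : {measure set X -> \bar R}).
Hypothesis mg : Hmeasurable gamma.

Lemma measurable_ballH_preimage w eps : measurable (gamma @^-1` ballH w eps).
Proof.
have -> : ballH w eps = [set y | `|w - y| < RtoC eps].
  by apply/seteqP; split => y; rewrite /ballH /= distrC.
exact: measurable_preimage_open mg (open_norm_ball _ _).
Qed.

Lemma measure_norm_gt_lt (E : set X) (delta : R) :
  measurable E -> (mu E < +oo)%E -> 0 < delta ->
  exists N : nat, (mu (E `&` gamma @^-1` [set y | (N%:R < `|y|)%R]) < delta%:E)%E.
Proof.
move=> mE muE delta0; pose G n := E `&` gamma @^-1` [set y | n%:R < `|y|].
have mG n : measurable (G n).
  exact: measurableI mE (measurable_preimage_open mg (open_norm_gt _ _)).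
have G_nonincr : nonincreasing_seq G.
  apply/nonincreasing_seqP => n; apply/subsetPset => x [Ex /= ltx]; split => //.
  by apply: le_lt_trans ltx; rewrite ler_nat.
have G_cap : \bigcap_n G n = set0.
  apply/seteqP; split => // x Gx.
  have [n ltn] := Creal_lt_nat (normr_real (gamma x)).
  by have [_ /= /(lt_trans ltn)] := Gx n I; rewrite ltxx.
have muG0 : (mu (G 0%N) < +oo)%E.
  by apply: le_lt_trans muE; apply: le_measure; rewrite ?inE // => x [].
have := nonincreasing_cvg_mu muG0 mG (bigcapT_measurable mG) G_nonincr.
rewrite G_cap measure0 => /(_ _ (@nbhs_open_ereal_lt R 0 (fun _ => delta) delta0))[N _].
by move/(_ N (leqnn N)); exists N.
Qed.

Lemma A_gamma_continuous_in_measure : continuous_in_measure mu (A_gamma ip gamma).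
Proof.
move=> v E eps delta mE muE eps0 delta0.
have [N muN] := measure_norm_gt_lt mE muE delta0.
exists (eps / N.+1%:R) => [|w wv]; first by rewrite divr_gt0.
apply: le_lt_trans muN; apply: le_measure; rewrite ?inE.
- apply: measurableI mE (measurable_preimage_open _ (open_norm_gt _ _)).
  exact: Cmeasurable_sub (A_gamma_measurable ipP mg w) (A_gamma_measurable ipP mg v).
- exact: measurableI mE (measurable_preimage_open mg (open_norm_gt _ _)).
move=> x [Ex]; rewrite /= /A_gamma -(ipBl ipP) => lt_eps; split => //=.
rewrite real_ltNge ?normr_real ?realn //; apply/negP => le_N.
have : `|ip (w - v) (gamma x)| < RtoC eps.
  apply: le_lt_trans (ip_cauchy_schwarz ipP _ _) _.
  apply: le_lt_trans (ler_pM _ _ (ltW wv) le_N) _ => //.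
  rewrite /RtoC -(rmorph_nat (real_complex R)) -rmorphM ltcR.
  by rewrite mulrAC ltr_pdivrMr // ltr_pM2l // ltr_nat.
by move/lt_trans/(_ lt_eps); rewrite ltxx.
Qed.

Lemma ess_range_sub_closure_image (N : set X) : measurable N -> mu N = 0%E ->
  ess_range mu gamma `<=` closure (gamma @` ~` N).
Proof.
move=> mN muN0 w essw; apply/closure_normP => r r0.
have /complex_realP[r' rE] := gtr0_real r0; subst r; rewrite ltcR in r0.
have [x [Bx Nx]] : exists x, (gamma @^-1` ballH w r') x /\ ~ N x.
  apply: contrapT => noX.
  have BN : gamma @^-1` ballH w r' `<=` N.
    by move=> x Bx; apply: contrapT => Nx; apply: noX; exists x.
  have : (mu (gamma @^-1` ballH w r') <= 0)%E.
    rewrite -muN0; apply: le_measure BN; rewrite inE //.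
    exact: measurable_ballH_preimage.
  by rewrite leNgt essw.
by exists (gamma x); [exists x | rewrite distrC].
Qed.

Lemma ess_range_ae : separable_set (closed_span (range gamma)) ->
  {ae mu, forall x, ess_range mu gamma (gamma x)}.
Proof.
move=> sep; have [e [_ e_dense]] := span_range_dense_seq sep.
pose B n k := gamma @^-1` [set y | `|e n - y| < inv_succ k].
pose null_ball m := if @unpickle (nat * nat)%type m is Some (n, k) then
  (if `[< mu (B n k) = 0%E >] then B n k else set0) else set0.
have null_ballN m : mu.-negligible (null_ball m).
  rewrite /null_ball; case: (unpickle m) => [[n k]|]; last exact: negligible_set0.
  case: asboolP => [muB0|_]; last exact: negligible_set0.
  by exists (B n k); split => //; exact: measurable_preimage_open mg (open_norm_ball _ _).
apply: negligibleS (negligible_bigcup null_ballN) => x /= not_ess.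
have [eps [eps0 mu0]] : exists eps : R, 0 < eps /\
    mu (gamma @^-1` ballH (gamma x) eps) = 0%E.
  apply: contrapT => pos; apply: not_ess => eps eps0.
  rewrite lt0e measure_ge0 andbT; apply/eqP => mu0; apply: pos; exists eps.
  by split.
have [k ltk] : exists k, inv_succ k + inv_succ k < RtoC eps.
  by apply: inv_succ_half; rewrite /RtoC ltcR.
have [n xn] := e_dense x _ (inv_succ_gt0 R k).
have Bsub : B n k `<=` gamma @^-1` ballH (gamma x) eps.
  move=> y /= ny; rewrite /ballH /=.
  apply: le_lt_trans (ler_distD (e n) _ _) (lt_trans _ ltk).
  by rewrite distrC ltrD // distrC.
have muB0 : mu (B n k) = 0%E.
  apply/eqP; rewrite eq_le measure_ge0 andbT -mu0.
  apply: le_measure Bsub; rewrite inE; last exact: measurable_ballH_preimage.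
  exact: measurable_preimage_open mg (open_norm_ball _ _).
exists (pickle (n, k)) => //; rewrite /null_ball pickleK.
by case: asboolP => // _; rewrite /B /= distrC.
Qed.

Lemma ker_A_gamma : separable_set (closed_span (range gamma)) ->
  [set v | {ae mu, forall x, A_gamma ip gamma v x = 0}] =
    orthocomp ip (closed_span (ess_range mu gamma)).
Proof.
move=> sep; apply/seteqP; split => v /=.
  case=> N [mN muN0 Nc] w; apply: (ip_closure_eq0 ipP); apply: (ip_span_eq0 ipP).
  move=> z /(ess_range_sub_closure_image mN muN0); apply: (ip_closure_eq0 ipP).
  by move=> _ [x Nx <-]; apply: contrapT => vx; apply/Nx/Nc.
move=> v_orth; apply: filterS (ess_range_ae sep) => x essx.
exact/v_orth/subset_closure/span1.
Qed.

End AGammaOnMeasureSpace.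

Unset Implicit Arguments.
Set Strict Implicit.

Theorem proposition2 (R : realType) (H : completeNormedModType (Cplx R))
    (ip : H -> H -> Cplx R) (d : measure_display) (X : measurableType d)
    (gamma : X -> H) :
  is_inner_product ip ->
  separable_set (closed_span (range gamma)) ->
  let c1 := forall v : H, Cmeasurable (A_gamma ip gamma v) in
  let c2 := Hmeasurable gamma in
  let c3 := Cmeasurable (Gamma_ker ip gamma) in
  let c4 := forall x : X, Cmeasurable (fun t : X => Gamma_ker ip gamma (x, t)) in
  ((c1 <-> c2) /\ (c2 <-> c3) /\ (c3 <-> c4)) /\
  (forall mu : {measure set X -> \bar R}, sigma_finite setT mu ->
     (c1 \/ c2 \/ c3 \/ c4) ->
     (forall v : H, Cmeasurable (A_gamma ip gamma v)) /\
     continuous_in_measure mu (A_gamma ip gamma) /\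
     [set v : H | {ae mu, forall x, A_gamma ip gamma v x = 0}] =
       orthocomp ip (closed_span (ess_range mu gamma))).
Proof.
move=> ipP sep c1 c2 c3 c4.
have c12 : c1 -> c2 := fun h => Hmeasurable_A_gamma ipP sep h.
have c21 : c2 -> c1 := fun h => A_gamma_measurable ipP h.
have c23 : c2 -> c3 := fun h => Gamma_ker_measurable ipP sep h.
have c34 : c3 -> c4 := fun h => Gamma_ker_sections_measurable h.
have c42 : c4 -> c2 := fun h => Hmeasurable_Gamma_ker_sections ipP sep h.
split; first by do !split;
  by [move/c12 | move/c21 | move/c23 | move/c34/c42 | move/c34 | move/c42/c23].
move=> mu _ cond; have mg : c2 by case: cond => [/c12|[|[/c34/c42|/c42]]].
split; first exact: c21.
by split; [exact: A_gamma_continuous_in_measure | exact: ker_A_gamma].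
Qed.
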